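(* Let $G$ be a finite group and $\mathcal{P}$ a prime ideal of $\mathrm{Gh}(\underline{A}_G)$. For each $H\le G$ write $\mathcal{P}(G/H)=\widetilde{A}(H)\cap\prod_{I\le H}n_{I,H}\mathbb{Z}$ with integers $n_{I,H}\ge0$. Then for all $I\le H\le G$, $n_{I,H}=n_{I,G}$.
   Context: For $H\le G$, $\widetilde{A}(H)$ is the subring of $\prod_{I\le H}\mathbb{Z}$ of tuples $(a_I)_{I\le H}$ with $a_{hIh^{-1}}=a_I$ for $h\in H$; every ideal of $\widetilde{A}(H)$ is of the form $\widetilde{A}(H)\cap\prod_{I\le H}n_I\mathbb{Z}$ with unique $n_I\ge0$ constant on $H$-conjugacy classes. $\mathrm{Gh}(\underline{A}_G)$ is the $G$-Tambara functor with $\mathrm{Gh}(\underline{A}_G)(G/H)=\widetilde{A}(H)$ and, for $H\le K$, $g\in G$, $I^g=g^{-1}Ig$: $\mathrm{res}^K_H(b)_L=b_L$; $\mathrm{tr}^K_H(a)_I=\sum_{kH\in K/H,\ I^k\le H}a_{I^k}$; $\mathrm{nm}^K_H(a)_I=\prod_{IgH\in I\backslash K/H}a_{I^g\cap H}$; $c_{g,H}(a)_J=a_{J^g}$ for $J\le gHg^{-1}$. A Tambara ideal is a collection of ideals $\mathcal{I}(G/H)$ closed under all restrictions, transfers, norms and conjugations; it is prime (Nakaoka) if it is not everything and whenever $a\in T(G/K_1)$, $b\in T(G/K_2)$ satisfy $\big(\mathrm{nm}^L_{g_1H_1g_1^{-1}}c_{g_1,H_1}\mathrm{res}^{K_1}_{H_1}(a)\big)\big(\mathrm{nm}^L_{g_2H_2g_2^{-1}}c_{g_2,H_2}\mathrm{res}^{K_2}_{H_2}(b)\big)\in\mathcal{I}(G/L)$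 for all $L,H_1,H_2\le G$, $g_1,g_2\in G$ with $H_i\le K_i$, $g_iH_ig_i^{-1}\le L$, then $a\in\mathcal{I}(G/K_1)$ or $b\in\mathcal{I}(G/K_2)$. *)

From mathcomp Require Import all_boot all_order all_algebra all_fingroup.
Set Implicit Arguments. Unset Strict Implicit. Unset Printing Implicit Defensive.
Import GRing.Theory.
Local Open Scope ring_scope.

(* Elements of Gh(A_G)(G/H) = Ã(H) are represented as functions
   a : {group gT} -> int, with a I meaningful for I <= H and normalized to 0
   for I not a subgroup of H.  Conjugation I^g = g^-1 I g is mathcomp's I :^ g. *)

Section Ghost.
Variable gT : finGroupType.
Implicit Types (H I J K L : {group gT}) (a b : {group gT} -> int).

Definition Atil H a : Prop :=
  (forall I, ~~ (I \subset H) -> a I = 0) /\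
  (forall I (h : gT), I \subset H -> h \in H -> a (I :^ h)%G = a I).

Definition gh_add a b : {group gT} -> int := fun I => a I + b I.
Definition gh_opp a : {group gT} -> int := fun I => - a I.
Definition gh_mul a b : {group gT} -> int := fun I => a I * b I.
Definition gh_zero : {group gT} -> int := fun _ => 0.

Definition gh_res H b : {group gT} -> int :=
  fun L => if L \subset H then b L else 0.

Definition gh_tr K H a : {group gT} -> int :=
  fun I => if I \subset K then
    \sum_(C in lcosets H K)
       (let k := repr C in if (I :^ k \subset H)%g then a (I :^ k)%G else 0)
  else 0.

Definition dcosets I K H : {set {set gT}} :=
  [set ((I :* g) * H)%g | g in K].

Definition gh_nm K H a : {group gT} -> int :=
  fun I => if I \subset K then
    \prod_(D in dcosets I K H)
       (let g := repr D in a ((I :^ g) :&: H)%G)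
  else 0.

(* c_{g,H} : Ã(H) -> Ã(gHg^-1), c(a)_J = a_{J^g} for J <= gHg^-1 = H :^ g^-1 *)
Definition gh_conj (g : gT) H a : {group gT} -> int :=
  fun J => if (J \subset H :^ g^-1)%g then a (J :^ g)%G else 0.

Definition gh_ideal H (P : ({group gT} -> int) -> Prop) : Prop :=
  (forall a, P a -> Atil H a) /\ P gh_zero /\
  (forall a b, P a -> P b -> P (gh_add a (gh_opp b))) /\
  (forall r a, Atil H r -> P a -> P (gh_mul r a)).

Definition tambara_ideal (G : {group gT})
  (P : {group gT} -> ({group gT} -> int) -> Prop) : Prop :=
  (forall H, H \subset G -> gh_ideal H (P H)) /\
  (forall H K b, H \subset K -> K \subset G -> P K b -> P H (gh_res H b)) /\
  (forall H K a, H \subset K -> K \subset G -> P H a -> P K (gh_tr K H a)) /\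
  (forall H K a, H \subset K -> K \subset G -> P H a -> P K (gh_nm K H a)) /\
  (forall H (g : gT) a, H \subset G -> g \in G -> P H a ->
      P (H :^ g^-1)%G (gh_conj g H a)).

Definition prime_tambara_ideal (G : {group gT})
  (P : {group gT} -> ({group gT} -> int) -> Prop) : Prop :=
  tambara_ideal G P /\
  (exists H a, H \subset G /\ Atil H a /\ ~ P H a) /\
  (forall K1 K2 a b, K1 \subset G -> K2 \subset G -> Atil K1 a -> Atil K2 b ->
    (forall L H1 H2 (g1 g2 : gT), L \subset G -> H1 \subset K1 -> H2 \subset K2 ->
       g1 \in G -> g2 \in G -> (H1 :^ g1^-1 \subset L)%g -> (H2 :^ g2^-1 \subset L)%g ->
       P L (gh_mul (gh_nm L (H1 :^ g1^-1)%G (gh_conj g1 H1 (gh_res H1 a)))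
                   (gh_nm L (H2 :^ g2^-1)%G (gh_conj g2 H2 (gh_res H2 b))))) ->
    P K1 a \/ P K2 b).

End Ghost.

(* Restricting the element (n_{J,H})_J of P(G/H) to I gives n_{I,I} | n_{I,H}.
   Conversely, norming n_{I,I} * delta_I from I up to N_H(I), cutting the
   result down to the class of I with the idempotent delta_I and transferring
   to H produces an element of P(G/H) whose I-coordinate is a power of n_{I,I}.
   Since res, c and nm are multiplicative, primality tested on (a, a) makes
   every P(G/H) a radical ideal, so n_{I,H} divides n_{I,I} itself.  Hence
   n_{I,H} = n_{I,I} for every H >= I, in particular for H = G. *)

From mathcomp Require Import all_boot all_order all_algebra all_fingroup.
Set Implicit Arguments. Unset Strict Implicit. Unset Printing Implicit Defensive.
Import GRing.Theory.
Local Open Scope ring_scope.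

Section GhostOperations.
Variable gT : finGroupType.
Implicit Types (H I J K L N T : {group gT}) (a b x y z : {group gT} -> int).

Lemma Atil_eq H a b : Atil H a -> a =1 b -> Atil H b.
Proof.
case=> a_out a_conj ab; split=> [J|J h] *; rewrite -!ab; [exact: a_out | exact: a_conj].
Qed.

Lemma Atil_mul H a b : Atil H a -> Atil H b -> Atil H (gh_mul a b).
Proof.
case=> a_out a_conj [b_out b_conj]; split=> [J|J h] *; rewrite /gh_mul.
  by rewrite a_out ?mul0r.
by rewrite a_conj ?b_conj.
Qed.

Lemma Atil_comp H a (f : int -> int) :
  Atil H a -> f 0 = 0 -> Atil H (fun J => f (a J)).
Proof.
by move=> [a_out a_conj] f0; split=> [J /a_out ->|J h /a_conj aJ /aJ ->].
Qed.

Lemma Atil_res H K x : H \subset K -> Atil K x -> Atil H (gh_res H x).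
Proof.
move=> sHK [x_out x_conj]; split=> [J /negbTE nsJH|J h sJH hH]; rewrite /gh_res.
  by rewrite nsJH.
by rewrite conj_subG // sJH x_conj ?(subset_trans sJH) ?(subsetP sHK).
Qed.

Lemma Atil_conj H (g : gT) z : Atil H z -> Atil (H :^ g^-1)%G (gh_conj g H z).
Proof.
move=> [z_out z_conj]; split=> [J /negbTE nsJ|J h sJ hH]; rewrite /gh_conj.
  by rewrite nsJ.
rewrite conj_subG // sJ.
have sJgH : (J :^ g)%G \subset H by rewrite /= sub_conjg.
have hgH : (h ^ g)%g \in H by rewrite -mem_conjgV.
rewrite -(z_conj _ _ sJgH hgH); congr z; apply: group_inj => /=.
by rewrite -!conjsgM conjgC.
Qed.

Lemma mem_dcoset J T (g : gT) : g \in (J :* g * T)%g.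
Proof. by rewrite -{1}[g]mulg1 mem_mulg ?rcoset_refl. Qed.

Lemma dcoset_factor J T y (g u : gT) : Atil T y -> u \in (J :* g * T)%g ->
  y ((J :^ u) :&: T)%G = y ((J :^ g) :&: T)%G.
Proof.
move=> [_ y_conj] /mulsgP[_ t /rcosetP[j jJ ->] tT ->].
have -> : ((J :^ (j * g * t)) :&: T)%G = (((J :^ g) :&: T)%G :^ t)%G.
  by apply: group_inj; rewrite /= !conjsgM (conjGid jJ) conjIg (conjGid tT).
by rewrite y_conj // subsetIr.
Qed.

Lemma dcosets_conj J L T (h : gT) : h \in L ->
  dcosets (J :^ h)%G L T = [set (h^-1 *: D)%g | D in dcosets J L T].
Proof.
move=> hL; rewrite /dcosets -imset_comp; apply/setP=> D.
apply/imsetP/imsetP=> [[g gL ->]|[g gL ->]].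
  exists (h * g)%g; first by rewrite groupM.
  by rewrite /= conjsgE -!mulgA lcosetM.
exists (h^-1 * g)%g; first by rewrite groupM ?groupV.
by rewrite /= conjsgE -!mulgA -lcosetM mulKVg.
Qed.

Lemma Atil_nm L T y : T \subset L -> Atil T y -> Atil L (gh_nm L T y).
Proof.
move=> sTL Ty; split=> [J /negbTE nsJL|J h sJL hL]; rewrite /gh_nm.
  by rewrite nsJL.
rewrite conj_subG // sJL dcosets_conj // big_imset /=; last first.
  by move=> D1 D2 _ _; apply: lcoset_inj.
apply: eq_bigr => _ /imsetP[g gL ->].
rewrite (dcoset_factor Ty (mem_repr _ (mem_dcoset J T g))).
set u := (h * repr (h^-1 *: (J :* g * T)))%g.
have uD : u \in (J :* g * T)%g.
  have hD : (h^-1 * g)%g \in (h^-1 *: (J :* g * T))%g.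
    by rewrite mem_lcoset invgK mulKVg mem_dcoset.
  by have := mem_repr _ hD; rewrite mem_lcoset invgK.
rewrite -(dcoset_factor Ty uD).
by congr y; apply: group_inj; rewrite /= conjsgM.
Qed.

Lemma gh_res_mul T f y z : f =1 gh_mul y z ->
  gh_res T f =1 gh_mul (gh_res T y) (gh_res T z).
Proof. by move=> fE J; rewrite /gh_res /gh_mul; case: ifP; rewrite ?fE ?mulr0. Qed.

Lemma gh_conj_mul (g : gT) T f y z : f =1 gh_mul y z ->
  gh_conj g T f =1 gh_mul (gh_conj g T y) (gh_conj g T z).
Proof. by move=> fE J; rewrite /gh_conj /gh_mul; case: ifP; rewrite ?fE ?mulr0. Qed.

Lemma gh_nm_mul K T f y z : f =1 gh_mul y z ->
  gh_nm K T f =1 gh_mul (gh_nm K T y) (gh_nm K T z).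
Proof.
move=> fE J; rewrite /gh_nm /gh_mul; case: ifP => _; last by rewrite mulr0.
by rewrite -big_split; apply: eq_bigr => D _; rewrite fE.
Qed.

Definition gh_delta I (c : int) : {group gT} -> int :=
  fun J => if J == I then c else 0.

Lemma eq_conjG_norm I J (h : gT) : h \in 'N(I)%g -> ((J :^ h)%G == I) = (J == I).
Proof.
move=> hN; apply/eqP/eqP => [/(congr1 val) /= JhI|->]; apply: group_inj => /=.
  by rewrite -[gval J](conjsgK h) JhI; apply/normP; rewrite groupV.
exact/normP.
Qed.

Lemma Atil_delta I N c : I \subset N -> N \subset 'N(I)%g -> Atil N (gh_delta I c).
Proof.
move=> sIN sNnI; split=> [J nsJN|J h _ hN]; rewrite /gh_delta.
  by case: eqP nsJN => // ->; rewrite sIN.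
by rewrite eq_conjG_norm ?(subsetP sNnI).
Qed.

Lemma gh_nm_normal I N x : I \subset N -> N \subset 'N(I)%g ->
  gh_nm N I x I = x I ^+ #|dcosets I N I|.
Proof.
move=> sIN sNnI; rewrite /gh_nm sIN -prodr_const.
apply: eq_bigr => _ /imsetP[g gN ->].
have: repr (I :* g * I)%g \in 'N(I)%g.
  have /mulsgP[_ t /rcosetP[j jI ->] tI ->] := mem_repr _ (mem_dcoset I I g).
  have sInI := subsetP (normG I).
  by rewrite !groupM ?(subsetP sNnI g gN) ?sInI.
by move=> /normP rN; congr x; apply: group_inj; rewrite /= rN setIid.
Qed.

(* Only the trivial coset [N] contributes: [I :^ k = I] forces [k \in 'N_H(I)]. *)
Lemma gh_tr_delta I H y : I \subset H ->
  gh_tr H 'N_H(I)%G (gh_mul (gh_delta I 1) y) I = y I.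
Proof.
move=> sIH; set N := 'N_H(I)%G.
have sNH : N \subset H by exact: subsetIl.
have NH : gval N \in lcosets N H.
  by rewrite -{1}(lcoset_id (group1 N)) mem_lcosets -[1%g]mulg1 mem_mulg.
rewrite /gh_tr sIH (bigD1 _ NH) /= repr_group conjsg1 subsetI sIH normG.
have -> : (I :^ 1)%G = I by apply: group_inj; rewrite /= conjsg1.
rewrite /gh_mul /gh_delta eqxx mul1r big1 ?addr0 // => _ /andP[/imsetP[k kH ->]].
move=> nNk; case: ifP => // _; case: eqP => [IkI|_]; last by rewrite mul0r.
have rD : repr (lcoset N k) \in (k *: N)%g.
  by rewrite -lcosetE; apply: (mem_repr k); rewrite lcosetE lcoset_refl.
have rN : repr (lcoset N k) \in N.
  rewrite inE; apply/andP; split.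
    by move: rD => /lcosetP[u uN ->]; rewrite groupM // (subsetP sNH).
  by apply/normP; move/(congr1 val): IkI.
by move: nNk; rewrite lcosetE -(lcoset_eqP rD) (lcoset_id rN) eqxx.
Qed.

End GhostOperations.

Lemma dvdz_mul_of_sqr (d a b : int) :
  (d %| a * a)%Z -> (d %| b * b)%Z -> (d %| a * b)%Z.
Proof.
rewrite !dvdzE !abszM => daa dbb.
by rewrite -(dvdn_pexp2r _ _ (isT : 0 < 2)%N) expnMn dvdn_mul.
Qed.

Section PrimeTambaraIdeal.
Variables (gT : finGroupType) (G : {group gT}).
Variable P : {group gT} -> ({group gT} -> int) -> Prop.
Variable n : {group gT} -> {group gT} -> nat.
Hypothesis P_prime : prime_tambara_ideal G P.
Hypothesis P_levels : forall H : {group gT}, H \subset G ->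
  (forall (I : {group gT}) (h : gT), I \subset H -> h \in H ->
     n (I :^ h)%G H = n I H) /\
  (forall a, P H a <->
     (Atil H a /\ forall I : {group gT}, I \subset H -> ((n I H)%:Z %| a I)%Z)).

Implicit Types (H I J K L : {group gT}) (a b x y : {group gT} -> int).

Lemma P_levelP H a : H \subset G ->
  P H a <-> Atil H a /\ forall I, I \subset H -> ((n I H)%:Z %| a I)%Z.
Proof. by move=> sHG; exact: (P_levels sHG).2. Qed.

Lemma P_eq H a b : H \subset G -> P H a -> a =1 b -> P H b.
Proof.
move=> sHG /(P_levelP _ sHG) [Ha dvd_a] ab; apply/(P_levelP _ sHG).
by split=> [|I sIH]; [exact: Atil_eq Ha ab | rewrite -ab dvd_a].
Qed.

Lemma P_mul_of_sqr L y z : L \subset G -> Atil L y -> Atil L z ->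
  P L (gh_mul y y) -> P L (gh_mul z z) -> P L (gh_mul y z).
Proof.
move=> sLG Ly Lz /(P_levelP _ sLG) [_ dyy] /(P_levelP _ sLG) [_ dzz].
apply/(P_levelP _ sLG); split; first exact: Atil_mul.
by move=> J sJL; apply: dvdz_mul_of_sqr; [exact: dyy | exact: dzz].
Qed.

(* Res, conjugation and norm are multiplicative, so the primality test for [x]
   against itself only involves products of elements whose squares lie in [P]. *)
Lemma P_radical K x : K \subset G -> Atil K x -> P K (gh_mul x x) -> P K x.
Proof.
move=> sKG Kx Pxx.
have [[_ [P_res [_ [P_nm P_conj]]]] [_ P_primality]] := P_prime.
suff: P K x \/ P K x by case.
apply: P_primality => // L H1 H2 g1 g2 sLG sH1K sH2K g1G g2G sH1L sH2L.
have test_sq H g : H \subset K -> g \in G -> (H :^ g^-1)%G \subset L ->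
    let y := gh_nm L (H :^ g^-1)%G (gh_conj g H (gh_res H x)) in
    Atil L y /\ P L (gh_mul y y).
  move=> sHK gG sHL; split; first exact/Atil_nm/Atil_conj/(Atil_res sHK).
  have sHG := subset_trans sHK sKG.
  apply: (P_eq sLG (P_nm _ _ _ sHL sLG (P_conj _ _ _ sHG gG (P_res _ _ _ sHK sKG Pxx)))).
  exact/gh_nm_mul/gh_conj_mul/gh_res_mul.
have [Ly1 Py1] := test_sq _ _ sH1K g1G sH1L.
have [Ly2 Py2] := test_sq _ _ sH2K g2G sH2L.
exact: P_mul_of_sqr.
Qed.

Lemma P_radical_exp2 K x t :
  K \subset G -> Atil K x -> P K (fun J => x J ^+ (2 ^ t)) -> P K x.
Proof.
elim: t x => [|t IHt] x sKG Kx Px.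
  by apply: (P_eq sKG Px) => J; rewrite expr1.
have Kx2 : Atil K (fun J => x J ^+ (2 ^ t)).
  by apply: (Atil_comp (f := fun v => v ^+ (2 ^ t)) Kx); rewrite expr0n expn_eq0.
apply: (IHt _ sKG Kx); apply: (P_radical sKG Kx2).
by apply: (P_eq sKG Px) => J; rewrite /gh_mul -exprD addnn -mul2n -expnS.
Qed.

(* Test the radical ideal [P H] on the element equal to [m] exactly at the
   subgroups [J] with [n J H %| m ^ 2 ^ k]. *)
Lemma n_dvd_of_dvd_exp I H (m k : nat) : I \subset H -> H \subset G ->
  (n I H %| m ^ k)%N -> (n I H %| m)%N.
Proof.
move=> sIH sHG dvd_mk.
have [n_conj _] := P_levels sHG.
pose a J : int := if (J \subset H) && (n J H %| m ^ 2 ^ k)%N then m%:Z else 0.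
have Ha : Atil H a.
  split=> [J /negbTE nsJH|J h sJH hH]; first by rewrite /a nsJH.
  by rewrite /a conj_subG // sJH n_conj.
have a0 : (0 : int) ^+ (2 ^ k) = 0 by rewrite expr0n expn_eq0.
have /(P_levelP _ sHG) [_ /(_ I sIH)] : P H a.
  apply: (P_radical_exp2 (t := k) sHG Ha); apply/(P_levelP _ sHG); split.
    exact: (Atil_comp (f := fun v => v ^+ (2 ^ k)) Ha a0).
  move=> J sJH; rewrite /a sJH /=; case: ifP => [dvd_J|_]; last by rewrite a0.
  by rewrite dvdzE abszX.
rewrite /a sIH (dvdn_trans dvd_mk) ?dvdzE //.
exact/dvdn_exp2l/ltnW/ltn_expl.
Qed.

(* Restrict the element [J |-> n J H] of [P H] to [I]. *)
Lemma n_self_dvd I H : I \subset H -> H \subset G -> (n I I %| n I H)%N.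
Proof.
move=> sIH sHG; have sIG := subset_trans sIH sHG.
have [[_ [P_res _]] _] := P_prime.
have [n_conj _] := P_levels sHG.
pose w J : int := if J \subset H then (n J H)%:Z else 0.
have Pw : P H w.
  apply/(P_levelP _ sHG); split; last by move=> J sJH; rewrite /w sJH.
  split=> [J /negbTE nsJH|J h sJH hH]; first by rewrite /w nsJH.
  by rewrite /w conj_subG // sJH n_conj.
have /(P_levelP _ sIG) [_ /(_ I (subxx I))] := P_res _ _ _ sIH sHG Pw.
by rewrite /gh_res subxx /w sIH dvdzE.
Qed.

(* Norm [n I I] times the indicator of [I] from [I] up to ['N_H(I)], cut it
   down to the class of [I], and transfer to [H]. *)
Lemma n_dvd_exp_self I H : I \subset H -> H \subset G ->
  (n I H %| n I I ^ #|dcosets I 'N_H(I)%G I|)%N.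
Proof.
move=> sIH sHG; have sIG := subset_trans sIH sHG.
have [[P_ideal [_ [P_tr [P_nm _]]]] _] := P_prime.
set N := 'N_H(I)%G; set m := n I I.
have sIN : I \subset N by rewrite subsetI sIH normG.
have sNnI : N \subset 'N(I)%g by exact: subsetIr.
have sNH : N \subset H by exact: subsetIl.
have sNG := subset_trans sNH sHG.
have Px : P I (gh_delta I m).
  apply/(P_levelP _ sIG); split; first exact/Atil_delta/normG.
  by move=> J _; rewrite /gh_delta; case: eqP => [->|_]; rewrite ?dvdz0.
have Pnx := P_nm _ _ _ sIN sNG Px.
have Pdnx := (P_ideal N sNG).2.2.2 _ _ (Atil_delta 1 sIN sNnI) Pnx.
have /(P_levelP _ sHG) [_ /(_ I sIH)] := P_tr _ _ _ sNH sHG Pdnx.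
by rewrite gh_tr_delta // gh_nm_normal // /gh_delta eqxx dvdzE abszX.
Qed.

Lemma n_level_eq I H : I \subset H -> H \subset G -> n I H = n I I.
Proof.
move=> sIH sHG; apply/eqP; rewrite eqn_dvd n_self_dvd // andbT.
exact: n_dvd_of_dvd_exp sIH sHG (n_dvd_exp_self sIH sHG).
Qed.

End PrimeTambaraIdeal.

Theorem proposition4p5 (gT : finGroupType) (G : {group gT})
  (P : {group gT} -> ({group gT} -> int) -> Prop)
  (n : {group gT} -> {group gT} -> nat) :
  prime_tambara_ideal G P ->
  (forall H : {group gT}, H \subset G ->
     (forall (I : {group gT}) (h : gT), I \subset H -> h \in H ->
        n (I :^ h)%G H = n I H) /\
     (forall a, P H a <->
        (Atil H a /\ forall I : {group gT}, I \subset H -> ((n I H)%:Z %| a I)%Z))) ->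
  forall I H : {group gT}, I \subset H -> H \subset G -> n I H = n I G.
Proof.
move=> P_prime P_levels I H sIH sHG.
by rewrite !(n_level_eq P_prime P_levels) // (subset_trans sIH sHG).
Qed.
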